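(* Let $R$ be a commutative ring, $f\in R[[X]]$, and $S=R[[X]]/(f)$. Then every Cauchy sequence in $S$ for the $f_0S$-adic topology converges in $S$. Moreover, if $f_0$ is a nonzerodivisor in $R$ or $R$ is Noetherian, then $S$ is complete with respect to $f_0S$ (i.e. the natural map $S\to\varprojlim S/f_0^nS$ is an isomorphism), and the canonical $R[[X]]$-homomorphism $R[[X]]/(f)\to\widehat{R}_{(f_0)}[[X]]/(f)$ is an isomorphism.
   Context: $f_0$ is the constant term of $f$; $\widehat{R}_{(f_0)}$ is the $f_0$-adic completion of $R$. *)

From HB Require Import structures.
From mathcomp Require Import all_boot all_algebra.
Set Implicit Arguments. Unset Strict Implicit. Unset Printing Implicit Defensive.
Import GRing.Theory.
Local Open Scope ring_scope.

Definition powser (R : Type) := nat -> R.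

Definition ps_mul (R : comPzRingType) (a b : powser R) : powser R :=
  fun n => \sum_(i < n.+1) a i * b (n - i)%N.

Definition ps_sub (R : comPzRingType) (a b : powser R) : powser R :=
  fun n => a n - b n.

Definition const_term (R : Type) (f : powser R) : R := f 0%N.

Definition in_pideal (R : comPzRingType) (f g : powser R) : Prop :=
  exists h : powser R, forall n, g n = ps_mul h f n.

(* the class of g in S lies in f_0^k S, i.e. g in f_0^k R[[X]] + (f) *)
Definition in_f0S (R : comPzRingType) (f : powser R) (k : nat) (g : powser R)
  : Prop :=
  exists h q : powser R,
    forall n, g n = const_term f ^+ k * h n + ps_mul q f n.

Definition S_cauchy (R : comPzRingType) (f : powser R) (s : nat -> powser R)
  : Prop :=
  forall k, exists N, forall m n, (N <= m)%N -> (N <= n)%N ->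
    in_f0S f k (ps_sub (s m) (s n)).

Definition S_converges (R : comPzRingType) (f : powser R) (s : nat -> powser R)
  : Prop :=
  exists g : powser R, forall k, exists N, forall n, (N <= n)%N ->
    in_f0S f k (ps_sub (s n) g).

Definition S_to_limit_injective (R : comPzRingType) (f : powser R) : Prop :=
  forall g : powser R, (forall k, in_f0S f k g) -> in_pideal f g.

(* the natural map S -> lim_k S/f_0^k S is surjective: every compatible
   family (x_k mod f_0^k S), x_{k+1} = x_k mod f_0^k S, is the image of
   some g in S *)
Definition S_to_limit_surjective (R : comPzRingType) (f : powser R) : Prop :=
  forall x : nat -> powser R,
    (forall k, in_f0S f k (ps_sub (x k.+1) (x k))) ->
    exists g : powser R, forall k, in_f0S f k (ps_sub g (x k)).

Definition S_f0_complete (R : comPzRingType) (f : powser R) : Prop :=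
  S_to_limit_injective f /\ S_to_limit_surjective f.

(* r : nat -> R represents the compatible family (r n mod a^n R)_n *)
Definition compl_elt (R : comPzRingType) (a : R) (r : nat -> R) : Prop :=
  forall n, exists c, r n.+1 - r n = a ^+ n * c.

Definition compl_zero (R : comPzRingType) (a : R) (r : nat -> R) : Prop :=
  forall n, exists c, r n = a ^+ n * c.

(* R^_(a)[[X]]: G i is (a representative of) the i-th coefficient *)
Definition compl_ps (R : comPzRingType) (a : R) (G : nat -> nat -> R) : Prop :=
  forall i, compl_elt a (G i).

(* Cauchy product in R^_(a)[[X]] (ring operations of R^_(a) levelwise) *)
Definition cps_mul (R : comPzRingType) (G H : nat -> nat -> R) : nat -> nat -> R :=
  fun i n => \sum_(j < i.+1) G j n * H (i - j)%N n.

Definition cps_of_ps (R : comPzRingType) (g : powser R) : nat -> nat -> R :=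
  fun i _ => g i.

Definition cps_in_pideal (R : comPzRingType) (a : R) (f : powser R)
    (G : nat -> nat -> R) : Prop :=
  exists H, compl_ps a H /\
    forall i, compl_zero a (fun n => G i n - cps_mul H (cps_of_ps f) i n).

(* the canonical R[[X]]-homomorphism R[[X]]/(f) -> R^_(f_0)[[X]]/(f) *)
Definition canon_map_injective (R : comPzRingType) (f : powser R) : Prop :=
  forall g : powser R,
    cps_in_pideal (const_term f) f (cps_of_ps g) -> in_pideal f g.

Definition canon_map_surjective (R : comPzRingType) (f : powser R) : Prop :=
  forall G : nat -> nat -> R, compl_ps (const_term f) G ->
    exists g : powser R,
      cps_in_pideal (const_term f) f (fun i n => cps_of_ps g i n - G i n).

Definition canon_map_iso (R : comPzRingType) (f : powser R) : Prop :=
  canon_map_injective f /\ canon_map_surjective f.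

Definition is_ideal (R : comPzRingType) (I : R -> Prop) : Prop :=
  [/\ I 0, (forall x y, I x -> I y -> I (x + y)) & (forall r x, I x -> I (r * x))].

Definition noetherian (R : comPzRingType) : Prop :=
  forall I : R -> Prop, is_ideal I ->
    exists s : seq R, forall x,
      I x <-> exists c : nat -> R, x = \sum_(i < size s) c i * s`_i.

(* Write f = f_0 - ftail, where ftail has zero constant term.  Since
   f_0^k - ftail^k = f * geom k, the ideals f_0^k R[[X]] + (f) and
   ftail^k R[[X]] + (f) coincide; as ftail^k lies in X^k R[[X]], a sequence
   that is Cauchy for the f_0-adic filtration can be corrected modulo (f) into
   an X-adically convergent one, whose limit is the f_0-adic limit in S.
   Separatedness of S is an Artin-Rees type statement: it holds as soon as the
   ideals of initial coefficients (at degree j) of multiples of f of order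
   >= j stabilise, which is automatic when f_0 is regular (they are all equal)
   or R is Noetherian (they increase).  Surjectivity onto R^[[X]]/(f) applies
   the same construction to the levels of an element of R^[[X]]. *)
From HB Require Import structures.
From mathcomp Require Import all_boot all_algebra.
From mathcomp Require Import boolp ring zify.
Set Implicit Arguments. Unset Strict Implicit. Unset Printing Implicit Defensive.
Import GRing.Theory.
Local Open Scope ring_scope.

Lemma dependent_choice T (P : nat -> T -> Prop) (Rel : nat -> T -> T -> Prop) :
  (exists x, P 0%N x) -> (forall k x, P k x -> exists y, P k.+1 y /\ Rel k x y) ->
  exists u : nat -> T, forall k, P k (u k) /\ Rel k (u k) (u k.+1).
Proof.
move=> [x0 hx0] hstep.
have /choice[next hnext] : forall kx : nat * T,
    exists y, P kx.1 kx.2 -> P kx.1.+1 y /\ Rel kx.1 kx.2 y.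
  move=> [k x]; have [hx|nhx] := EM (P k x); last by exists x.
  by have [y hy] := hstep k x hx; exists y.
pose fix u k := if k is k'.+1 then next (k', u k') else x0.
have hu k : P k (u k).
  by elim: k => [|k IH]; [exact: hx0 | exact: (hnext (k, u k) IH).1].
by exists u => k; split; [exact: hu | exact: (hnext (k, u k) (hu k)).2].
Qed.

Lemma sumr_ord_diff (V : zmodType) (F : nat -> V) m K : (m <= K)%N ->
  \sum_(n < K) F n - \sum_(n < m) F n = \sum_(m <= n < K) F n.
Proof.
move=> hmK; rewrite -!(big_mkord xpredT) (big_cat_nat (leq0n m) hmK) /=.
by rewrite addrAC subrr add0r.
Qed.

Section PowerSeriesRing.
Variable R : comPzRingType.

Definition ps := powser R.
HB.instance Definition _ := Choice.on ps.

Definition ps0 : ps := fun _ => 0.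
Definition ps_add (u v : ps) : ps := fun n => u n + v n.
Definition ps_opp (u : ps) : ps := fun n => - u n.
Definition ps1 : ps := fun n => if n is 0 then 1 else 0.

Fact ps_addA : associative ps_add.
Proof. by move=> u v w; apply/funext=> n; rewrite /ps_add addrA. Qed.
Fact ps_addC : commutative ps_add.
Proof. by move=> u v; apply/funext=> n; rewrite /ps_add addrC. Qed.
Fact ps_add0 : left_id ps0 ps_add.
Proof. by move=> u; apply/funext=> n; rewrite /ps_add /ps0 add0r. Qed.
Fact ps_addN : left_inverse ps0 ps_opp ps_add.
Proof. by move=> u; apply/funext=> n; rewrite /ps_add /ps_opp /ps0 addNr. Qed.

HB.instance Definition _ := GRing.isNmodule.Build ps ps_addA ps_addC ps_add0.
HB.instance Definition _ := GRing.Nmodule_isZmodule.Build ps ps_addN.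

Fact ps_mulE (u v : ps) n : ps_mul u v n = \sum_(i < n.+1) u i * v (n - i)%N.
Proof. by []. Qed.

Fact ps_mul_rev (u v : ps) i :
  ps_mul u v i = \sum_(j < i.+1) u (i - j)%N * v j.
Proof.
rewrite ps_mulE (reindex_inj rev_ord_inj) /=.
by apply: eq_bigr => j _; rewrite (sub_ordK j).
Qed.

Fact ps_mulA : associative (@ps_mul R).
Proof.
move=> p q r; apply/funext=> i; rewrite ps_mulE ps_mul_rev.
pose coef3 j k := p j * (q (i - j - k)%N * r k).
transitivity (\sum_(j < i.+1) \sum_(k < i.+1 | (k <= i - j)%N) coef3 j k).
  apply: eq_bigr => /= j _; rewrite ps_mul_rev big_distrr /=.
  by rewrite (big_ord_narrow_leq (leq_subr _ _)).
rewrite (exchange_big_dep predT) //=; apply: eq_bigr => k _.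
transitivity (\sum_(j < i.+1 | (j <= i - k)%N) coef3 j k).
  apply: eq_bigl => j; rewrite -ltnS -(ltnS j) -!subSn ?leq_ord //.
  by rewrite -subn_gt0 -(subn_gt0 j) -!subnDA addnC.
rewrite (big_ord_narrow_leq (leq_subr _ _)) ps_mulE big_distrl /=.
by apply: eq_bigr => j _; rewrite /coef3 -!subnDA addnC mulrA.
Qed.

Fact ps_mulC : commutative (@ps_mul R).
Proof.
move=> u v; apply/funext=> i; rewrite ps_mulE ps_mul_rev.
by apply: eq_bigr => j _; rewrite mulrC.
Qed.

Fact ps_mul1 : left_id ps1 (@ps_mul R).
Proof.
move=> u; apply/funext=> i; rewrite /ps_mul big_ord_recl /= mul1r subn0.
by rewrite big1 ?addr0 // => j _; rewrite mul0r.
Qed.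

Fact ps_mulDl : left_distributive (@ps_mul R) ps_add.
Proof.
move=> u v w; apply/funext=> i; rewrite /ps_add /ps_mul -big_split /=.
by apply: eq_bigr => j _; rewrite mulrDl.
Qed.

HB.instance Definition _ := GRing.Zmodule_isComPzRing.Build ps
  ps_mulA ps_mulC ps_mul1 ps_mulDl.

Lemma ps_coefM (u v : ps) n : (u * v) n = \sum_(i < n.+1) u i * v (n - i)%N.
Proof. by []. Qed.
Lemma ps_coefD (u v : ps) n : (u + v) n = u n + v n. Proof. by []. Qed.
Lemma ps_coefN (u : ps) n : (- u) n = - u n. Proof. by []. Qed.
Lemma ps_coefB (u v : ps) n : (u - v) n = u n - v n. Proof. by []. Qed.
Lemma ps_coef_sum I (r : seq I) (P : pred I) (F : I -> ps) n :
  (\sum_(i <- r | P i) F i) n = \sum_(i <- r | P i) F i n.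
Proof. by elim/big_rec2: _ => // i y1 y2 _ <-. Qed.

Definition psC (c : R) : ps := fun n => if n is 0 then c else 0.
Definition psX : ps := fun n => if (n == 1)%N then 1 else 0.

Lemma ps_coefCM c (u : ps) n : (psC c * u) n = c * u n.
Proof.
rewrite ps_coefM big_ord_recl /= subn0 big1 ?addr0 // => i _.
by rewrite /psC /= mul0r.
Qed.

Lemma psCM c d : psC c * psC d = psC (c * d).
Proof. by apply/funext => -[|n]; rewrite ps_coefCM //= mulr0. Qed.

Lemma psCX c k : psC c ^+ k = psC (c ^+ k).
Proof. by elim: k => [|k IH] //; rewrite !exprS IH psCM. Qed.

Lemma ps_coefCXM c k (u : ps) n : (psC c ^+ k * u) n = c ^+ k * u n.
Proof. by rewrite psCX ps_coefCM. Qed.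

Lemma ps_coefXnM k (u : ps) n :
  (psX ^+ k * u) n = if (k <= n)%N then u (n - k)%N else 0.
Proof.
have coefXM (v : ps) m : (psX * v) m = if m is m'.+1 then v m' else 0.
  rewrite ps_coefM big_ord_recl /= /psX /= mul0r add0r.
  case: m => [|m]; first by rewrite big_ord0.
  rewrite big_ord_recl /= mul1r subSS subn0 big1 ?addr0 // => i _.
  by rewrite /= mul0r.
elim: k n => [|k IH] n; first by rewrite expr0 mul1r subn0.
by rewrite exprS -mulrA coefXM; case: n => [|n] //; rewrite IH subSS.
Qed.

Definition ord_ge k (u : ps) := forall i, (i < k)%N -> u i = 0.

Lemma ord_geD k (u v : ps) : ord_ge k u -> ord_ge k v -> ord_ge k (u + v).
Proof. by move=> hu hv i hi; rewrite ps_coefD hu ?hv ?addr0. Qed.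
Lemma ord_geN k (u : ps) : ord_ge k u -> ord_ge k (- u).
Proof. by move=> hu i hi; rewrite ps_coefN hu ?oppr0. Qed.
Lemma ord_geB k (u v : ps) : ord_ge k u -> ord_ge k v -> ord_ge k (u - v).
Proof. by move=> hu hv; apply: ord_geD => //; apply: ord_geN. Qed.
Lemma ord_geW k m (u : ps) : (m <= k)%N -> ord_ge k u -> ord_ge m u.
Proof. by move=> hmk hu i hi; apply: hu; apply: leq_trans hmk. Qed.

Lemma ord_geM m n (u v : ps) : ord_ge m u -> ord_ge n v -> ord_ge (m + n) (u * v).
Proof.
move=> hu hv i hi; rewrite ps_coefM big1 // => j _.
have [hjm|hmj] := ltnP j m; first by rewrite hu ?mul0r.
have hj := ltn_ord j.
by rewrite hv ?mulr0 //; lia.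
Qed.

Lemma ord_geMl k (u v : ps) : ord_ge k u -> ord_ge k (v * u).
Proof. by move=> hu; rewrite -[k]add0n; apply: ord_geM. Qed.
Lemma ord_geMr k (u v : ps) : ord_ge k u -> ord_ge k (u * v).
Proof. by rewrite mulrC; apply: ord_geMl. Qed.

Lemma ord_geX k (u : ps) : ord_ge 1 u -> ord_ge k (u ^+ k).
Proof.
move=> hu; elim: k => [|k IH]; first by [].
by rewrite exprS -add1n; apply: ord_geM.
Qed.

Lemma ord_ge_XnM k (u : ps) : ord_ge k (psX ^+ k * u).
Proof. by move=> i hi; rewrite ps_coefXnM leqNgt hi. Qed.

Lemma ord_ge_eq0 (u : ps) : (forall n, ord_ge n u) -> u = 0.
Proof. by move=> h; apply/funext => n; apply: (h n.+1). Qed.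

Lemma ord_ge_limit (w : nat -> ps) : (forall m, ord_ge m (w m.+1 - w m)) ->
  exists L : ps, forall m, ord_ge m (L - w m).
Proof.
move=> hw; exists (fun n => w n.+1 n) => m i him.
have stable j : (i < j)%N -> w j i = w i.+1 i.
  elim: j => [|j IH] // hij; rewrite ltnS leq_eqVlt in hij.
  case/orP: hij => [/eqP -> //|hij].
  have /eqP := hw j i hij; rewrite ps_coefB subr_eq0 => /eqP ->.
  exact: IH.
by rewrite ps_coefB stable // subrr.
Qed.

End PowerSeriesRing.
Arguments psX {R}.

Section Filtration.
Variables (R : comPzRingType) (f : powser R).
Local Notation ps := (ps R).
Local Notation fP := (f : ps).
Local Notation f0 := (const_term f).

Definition ftail : ps := psC f0 - fP.

Lemma ord_ge_ftailXM k (h : ps) : ord_ge k (ftail ^+ k * h).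
Proof.
apply: ord_geMr; apply: ord_geX => -[|//] _.
by rewrite /ftail ps_coefB subrr.
Qed.

Definition geom k : ps := \sum_(i < k) psC f0 ^+ (k.-1 - i) * ftail ^+ i.

Lemma f0X_sub_ftailX k : psC f0 ^+ k - ftail ^+ k = fP * geom k.
Proof. by rewrite subrXX /ftail opprB addrC subrK. Qed.

Lemma f0XE k : psC f0 ^+ k = ftail ^+ k + geom k * fP.
Proof. by rewrite mulrC -f0X_sub_ftailX addrC subrK. Qed.

Definition filt k (g : ps) := exists h q : ps, g = psC f0 ^+ k * h + q * fP.

Lemma in_f0S_filt k (g : ps) : in_f0S f k g <-> filt k g.
Proof.
split=> -[h [q hg]]; exists h, q; last by move=> n; rewrite hg ps_coefD ps_coefCXM.
by apply/funext => n; rewrite hg ps_coefD ps_coefCXM.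
Qed.

Lemma filt_ftailP k g : filt k g <-> exists h q : ps, g = ftail ^+ k * h + q * fP.
Proof.
split=> -[h [q ->]].
  by exists h, (geom k * h + q); rewrite f0XE; ring.
by exists h, (q - geom k * h); rewrite f0XE; ring.
Qed.

Lemma filtB k u v : filt k u -> filt k v -> filt k (u - v).
Proof. by move=> [h1 [q1 ->]] [h2 [q2 ->]]; exists (h1 - h2), (q1 - q2); ring. Qed.

Lemma ftail_adic_limit (z h : nat -> ps) :
  (forall k, z k.+1 - z k = ftail ^+ k * h k) ->
  exists g, forall k, exists t, g - z k = ftail ^+ k * t.
Proof.
move=> hz.
have [g hg] := @ord_ge_limit R z (fun m => ltac:(rewrite hz; exact: ord_ge_ftailXM)).
exists g => k.
pose T m := \sum_(j < m) ftail ^+ j * h (k + j)%N.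
have hT m : ord_ge m (T m.+1 - T m).
  by rewrite /T big_ord_recr /= addrAC subrr add0r; apply: ord_ge_ftailXM.
have [t ht] := ord_ge_limit hT.
have zE m : z (k + m)%N - z k = ftail ^+ k * T m.
  elim: m => [|m IH]; first by rewrite addn0 subrr /T big_ord0 mulr0.
  rewrite /T big_ord_recr /= mulrDr -/(T m) -IH addnS.
  have -> : z (k + m).+1 - z k = (z (k + m).+1 - z (k + m)%N) + (z (k + m)%N - z k)
    by ring.
  by rewrite hz exprD mulrA addrC.
exists t; apply/eqP; rewrite -subr_eq0; apply/eqP; apply: ord_ge_eq0 => n.
have -> : g - z k - ftail ^+ k * t = (g - z (k + n)%N) - ftail ^+ k * (t - T n).
  by rewrite mulrBr -zE; ring.
by apply: ord_geB; [apply: ord_geW (hg _); rewrite leq_addl | apply: ord_geMl].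
Qed.

Lemma filt_chain_limit (x : nat -> ps) : (forall k, filt k (x k.+1 - x k)) ->
  exists g, forall k, filt k (g - x k).
Proof.
move=> hx.
have /choice[p hp] : forall k, exists p : ps * ps,
    x k.+1 - x k = ftail ^+ k * p.1 + p.2 * fP.
  by move=> k; have /filt_ftailP[h [q e]] := hx k; exists (h, q).
pose z k := x k - (\sum_(j < k) (p j).2) * fP.
have hz k : z k.+1 - z k = ftail ^+ k * (p k).1.
  have -> : z k.+1 - z k = (x k.+1 - x k) - (p k).2 * fP.
    by rewrite /z big_ord_recr /=; ring.
  by rewrite hp; ring.
have [g hg] := ftail_adic_limit hz.
exists g => k; have [t ht] := hg k; apply/filt_ftailP.
by exists t, (- \sum_(j < k) (p j).2); rewrite -ht /z; ring.
Qed.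

Lemma filt_cauchy_converges (s : nat -> ps) :
  (forall k, exists N, forall m n, (N <= m)%N -> (N <= n)%N -> filt k (s m - s n)) ->
  exists g, forall k, exists N, forall n, (N <= n)%N -> filt k (s n - g).
Proof.
move=> /choice[N hN].
pose M k := (\sum_(j < k.+1) N j)%N.
have hNM k : (N k <= M k)%N by rewrite /M big_ord_recr leq_addl.
have hMS k : (M k <= M k.+1)%N by rewrite [M k.+1]/M big_ord_recr leq_addr.
have [g hg] := @filt_chain_limit (fun k => s (M k))
  (fun k => hN k _ _ (leq_trans (hNM k) (hMS k)) (hNM k)).
exists g => k; exists (M k) => n hn.
have -> : s n - g = (s n - s (M k)) - (g - s (M k)) by ring.
by apply: filtB; [exact: hN (leq_trans (hNM k) hn) (hNM k) | exact: hg].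
Qed.

Definition init_coef j (x : R) := exists e : ps, ord_ge j (e * fP) /\ (e * fP) j = x.

Definition init_coef_stable c0 :=
  forall j x, (c0 <= j)%N -> init_coef j x -> init_coef c0 x.

Lemma filt_cap_ideal c0 : init_coef_stable c0 ->
  forall g, (forall k, filt k g) -> exists q, g = q * fP.
Proof.
move=> hst g hg.
have hgq k : exists q, ord_ge k (g - q * fP).
  have /filt_ftailP[h [q ->]] := hg k.
  by exists q; rewrite addrK; apply: ord_ge_ftailXM.
pose Q k q := ord_ge (k + c0) (g - q * fP).
have step k q : Q k q -> exists q', Q k.+1 q' /\ ord_ge k (q' - q).
  move=> hQ; have [q'' hq''] := hgq (k + c0).+1.
  pose d := g - q * fP.
  have hqd : (q'' - q) * fP = d - (g - q'' * fP) by rewrite /d; ring.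
  have hL : init_coef (k + c0) (d (k + c0)%N).
    exists (q'' - q); rewrite hqd; split.
      by apply: ord_geB => //; apply: ord_geW hq''.
    by rewrite ps_coefB (hq'' (k + c0)%N) ?subr0.
  have [e [he1 he2]] := hst _ _ (leq_addl k c0) hL.
  exists (q + psX ^+ k * e); split; last by rewrite addrAC subrr add0r; exact: ord_ge_XnM.
  rewrite /Q; have -> : g - (q + psX ^+ k * e) * fP = d - psX ^+ k * (e * fP).
    by rewrite /d; ring.
  move=> i; rewrite ltnS leq_eqVlt => /orP[/eqP ->|hi]; rewrite ps_coefB ps_coefXnM.
    by rewrite leq_addr addKn he2 subrr.
  have -> : d i = 0 := hQ i hi; case: ifP => hki; last by rewrite subr0.
  by rewrite he1 ?subrr // ltn_subLR.
have [qs hqs] := dependent_choice (hgq c0) step.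
have [q hq] := ord_ge_limit (fun m => (hqs m).2).
exists q; apply/eqP; rewrite -subr_eq0; apply/eqP; apply: ord_ge_eq0 => n.
have -> : g - q * fP = (g - qs n * fP) - (q - qs n) * fP by ring.
by apply: ord_geB; [exact: ord_geW (leq_addr _ _) (hqs n).1 | exact: ord_geMr].
Qed.

Lemma coef_top (e : ps) i :
  (e * fP) i = \sum_(l < i) e l * f (i - l)%N + e i * f0.
Proof. by rewrite ps_coefM big_ord_recr /= subnn. Qed.

Lemma ord_ge_lreg (e : ps) j : GRing.lreg f0 -> ord_ge j (e * fP) -> ord_ge j e.
Proof.
move=> hreg; elim: j => [//|j IH] hej i.
rewrite ltnS leq_eqVlt => /orP[/eqP ->|]; last by apply: IH; apply: ord_geW hej.
have ej0 := IH (ord_geW (leqnSn j) hej).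
apply: hreg; rewrite mulr0 mulrC -(hej j (ltnSn j)) coef_top.
by rewrite big1 ?add0r // => l _; rewrite ej0 ?mul0r.
Qed.

Lemma init_coef_stable_lreg : GRing.lreg f0 -> init_coef_stable 0.
Proof.
move=> hreg j x _ [e [hej <-]]; exists (psC (e j)); split => //.
have ej0 := ord_ge_lreg hreg hej.
rewrite ps_coefCM coef_top big1 ?add0r // => l _.
by rewrite ej0 ?mul0r.
Qed.

Lemma init_coef0 j : init_coef j 0.
Proof. by exists 0; split; rewrite mul0r. Qed.

Lemma init_coefD j x y : init_coef j x -> init_coef j y -> init_coef j (x + y).
Proof.
move=> [e1 [h1 <-]] [e2 [h2 <-]]; exists (e1 + e2); rewrite mulrDl.
by split; [exact: ord_geD | rewrite ps_coefD].
Qed.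

Lemma init_coefMl j r x : init_coef j x -> init_coef j (r * x).
Proof.
move=> [e [h <-]]; exists (psC r * e); rewrite -mulrA.
by split; [exact: ord_geMl | rewrite ps_coefCM].
Qed.

Lemma init_coef_mono j j' x : (j <= j')%N -> init_coef j x -> init_coef j' x.
Proof.
move=> hjj' [e [h <-]]; exists (psX ^+ (j' - j) * e); rewrite -mulrA.
split; last by rewrite ps_coefXnM leq_subr subKn.
move=> i hi; rewrite ps_coefXnM; case: ifP => // hk.
by apply: h; lia.
Qed.

Lemma init_coef_stable_noetherian : noetherian R -> exists c0, init_coef_stable c0.
Proof.
move=> hN; pose I x := exists j, init_coef j x.
have hI : is_ideal I.
  split; first by exists 0%N; apply: init_coef0.
    move=> x y [j1 h1] [j2 h2]; exists (maxn j1 j2).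
    by apply: init_coefD; [apply: init_coef_mono h1 | apply: init_coef_mono h2];
      rewrite ?leq_maxl ?leq_maxr.
  by move=> r x [j h]; exists j; apply: init_coefMl.
have [s hs] := hN I hI.
have /choice[js hjs] : forall i, exists j, init_coef j s`_i.
  move=> i; have [hi|hi] := ltnP i (size s); last first.
    by exists 0%N; rewrite nth_default //; apply: init_coef0.
  apply/(hs _).2; exists (fun l => if (l == i)%N then 1 else 0).
  rewrite (bigD1 (Ordinal hi)) //= eqxx mul1r big1 ?addr0 // => l hl.
  by rewrite ifN ?mul0r //; apply: contra hl => /eqP hli; apply/eqP/val_inj.
exists (\max_(i < size s) js i)%N => j x _ hx.
have [c ->] := (hs x).1 (ex_intro _ j hx).
apply: (big_ind (init_coef _)); [exact: init_coef0 | exact: init_coefD |] => i _.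
apply: init_coefMl; apply: init_coef_mono (hjs i).
exact: (leq_bigmax_cond (F := fun i : 'I_(size s) => js i) i).
Qed.

Definition f0X_dvd m (r : R) := exists c, r = f0 ^+ m * c.

Lemma f0X_dvd0 m : f0X_dvd m 0.
Proof. by exists 0; rewrite mulr0. Qed.
Lemma f0X_dvdD m x y : f0X_dvd m x -> f0X_dvd m y -> f0X_dvd m (x + y).
Proof. by move=> [c ->] [d ->]; exists (c + d); rewrite mulrDr. Qed.
Lemma f0X_dvdN m x : f0X_dvd m x -> f0X_dvd m (- x).
Proof. by move=> [c ->]; exists (- c); rewrite mulrN. Qed.
Lemma f0X_dvdB m x y : f0X_dvd m x -> f0X_dvd m y -> f0X_dvd m (x - y).
Proof. by move=> hx hy; apply: f0X_dvdD => //; apply: f0X_dvdN. Qed.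
Lemma f0X_dvdMr m x r : f0X_dvd m x -> f0X_dvd m (x * r).
Proof. by move=> [c ->]; exists (c * r); rewrite mulrA. Qed.
Lemma f0X_dvd_exp m n y : (m <= n)%N -> f0X_dvd m (f0 ^+ n * y).
Proof. by move=> hmn; exists (f0 ^+ (n - m) * y); rewrite mulrA -exprD subnKC. Qed.
Lemma f0X_dvd_sum m I (r : seq I) (P : pred I) (F : I -> R) :
  (forall i, P i -> f0X_dvd m (F i)) -> f0X_dvd m (\sum_(i <- r | P i) F i).
Proof. by move=> h; apply: big_ind => //; [exact: f0X_dvd0 | exact: f0X_dvdD]. Qed.

Lemma f0X_dvd_geomM m j n (u : ps) : (m + j < n)%N -> f0X_dvd m ((geom n * u) j).
Proof.
move=> hn; rewrite /geom big_distrl ps_coef_sum; apply: f0X_dvd_sum => i _ /=.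
rewrite -mulrA ps_coefCXM.
have [hij|hji] := ltnP j i.
  by rewrite (ord_ge_ftailXM u hij) mulr0; apply: f0X_dvd0.
by apply: f0X_dvd_exp; have := ltn_ord i; lia.
Qed.

Lemma compl_elt_sub (r : nat -> R) m K : compl_elt f0 r -> (m <= K)%N ->
  f0X_dvd m (r K - r m).
Proof.
move=> hr /subnKC <-; elim: (K - m)%N => [|d IH].
  by rewrite addn0 subrr; exact: f0X_dvd0.
have -> : r (m + d.+1)%N - r m = (r (m + d).+1 - r (m + d)%N) + (r (m + d)%N - r m).
  by rewrite addnS; ring.
apply: f0X_dvdD => //; have [c ->] := hr (m + d)%N.
by apply: f0X_dvd_exp; rewrite leq_addr.
Qed.

End Filtration.

Section Completeness.
Variables (R : comPzRingType) (f : powser R).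
Local Notation ps := (ps R).
Local Notation fP := (f : ps).
Local Notation f0 := (const_term f).

Lemma S_cauchy_converges (s : nat -> powser R) : S_cauchy f s -> S_converges f s.
Proof.
move=> hs; have [|g hg] := @filt_cauchy_converges R f s.
  by move=> k; have [N hN] := hs k; exists N => m n hm hn; apply/in_f0S_filt; exact: hN.
by exists g => k; have [N hN] := hg k; exists N => n hn; apply/in_f0S_filt; exact: hN.
Qed.

Lemma S_to_limit_surj : S_to_limit_surjective f.
Proof.
move=> x hx; have [|g hg] := @filt_chain_limit R f x.
  by move=> k; apply/in_f0S_filt; exact: hx.
by exists g => k; apply/in_f0S_filt; exact: hg.
Qed.

Lemma S_to_limit_inj c0 : init_coef_stable f c0 -> S_to_limit_injective f.
Proof.
move=> hst g hg; have [|q hq] := filt_cap_ideal hst (g := g).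
  by move=> k; apply/in_f0S_filt; exact: hg.
by exists q => n; rewrite hq.
Qed.

Lemma canon_map_inj : S_to_limit_injective f -> canon_map_injective f.
Proof.
move=> hinj g [H [_ hH]]; apply: hinj => k.
have /choice[c hc] : forall i, exists c,
    g i - cps_mul H (cps_of_ps f) i k = f0 ^+ k * c by move=> i; exact: hH i k.
exists c, (fun j => H j k) => i.
by move/eqP: (hc i); rewrite subr_eq addrC => /eqP ->.
Qed.

(* With x_n the level-n series of G, x_K = x_0 + w_K + S_K f and g is
   x_0 + lim w_K.  The level-m part of H only sums the terms n <= m + j of S in
   degree j: the omitted ones are divisible by f_0^m there, and the truncation
   is what makes H an element of the completion. *)
Lemma canon_map_surj : canon_map_surjective f.
Proof.
move=> G hG.
pose x n : ps := fun i => G i n.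
have /choice[h hh] : forall n, exists h : ps, x n.+1 - x n = psC f0 ^+ n * h.
  move=> n; have /choice[c hc] : forall i, exists c, G i n.+1 - G i n = f0 ^+ n * c.
    by move=> i; exact: hG i n.
  by exists c; apply/funext => i; rewrite ps_coefB ps_coefCXM hc.
pose w K := \sum_(n < K) ftail f ^+ n * h n.
pose S K := \sum_(n < K) geom f n * h n.
have xE K : x K = x 0%N + w K + S K * fP.
  elim: K => [|K IH]; first by rewrite /w /S !big_ord0; ring.
  rewrite /w /S !big_ord_recr /= -/(w K) -/(S K).
  have -> : x K.+1 = x K + (x K.+1 - x K) by ring.
  by rewrite hh f0XE IH; ring.
have [L hL] := @ord_ge_limit R w (fun m => ltac:(
  rewrite /w big_ord_recr /= addrAC subrr add0r; exact: ord_ge_ftailXM)).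
pose H j m := - S (m + j).+1 j.
exists (x 0%N + L), H; split.
  move=> j n; rewrite /H /S [(n.+1 + j)%N]addSn big_ord_recr /= ps_coefD.
  rewrite opprD addrAC subrr add0r; apply: f0X_dvdN.
  exact: f0X_dvd_geomM.
move=> i m; pose K := (m + i).+1.
have hLw : L i = w K i.
  by apply/eqP; rewrite -subr_eq0 -ps_coefB; apply/eqP; apply: hL; rewrite /K; lia.
have hmK : (m <= K)%N by rewrite /K; lia.
have -> : cps_of_ps (x 0%N + L) i m - G i m - cps_mul H (cps_of_ps f) i m =
    (G i K - G i m) - ((((fun j => H j m) : ps) + S K) * fP) i.
  have -> : cps_of_ps (x 0%N + L) i m = x K i - (S K * fP) i.
    by rewrite /cps_of_ps ps_coefD hLw (xE K) !ps_coefD; ring.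
  have -> : cps_mul H (cps_of_ps f) i m = (((fun j => H j m) : ps) * fP) i by [].
  have -> : G i K = x K i by [].
  by rewrite mulrDl ps_coefD; ring.
apply: f0X_dvdB; first exact: compl_elt_sub.
rewrite ps_coefM; apply: f0X_dvd_sum => l _; apply: f0X_dvdMr.
have hl : ((m + l).+1 <= K)%N by rewrite /K ltnS leq_add2l -ltnS ltn_ord.
rewrite ps_coefD /H addrC /S -ps_coefB.
rewrite (sumr_ord_diff (fun n => geom f n * h n) hl) ps_coef_sum.
rewrite big_nat_cond; apply: f0X_dvd_sum => n /andP [/andP [hn _] _].
exact: f0X_dvd_geomM.
Qed.

End Completeness.

Unset Implicit Arguments.

Theorem lemma3p4 (R : comPzRingType) (f : powser R) :
  (forall s : nat -> powser R, S_cauchy f s -> S_converges f s) /\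
  (GRing.lreg (const_term f) \/ noetherian R ->
     S_f0_complete f /\ canon_map_iso f).
Proof.
split=> [|hyp]; first exact: S_cauchy_converges.
have [c0 hc0] : exists c0, init_coef_stable f c0.
  case: hyp => [/init_coef_stable_lreg hst|]; first by exists 0%N.
  exact: init_coef_stable_noetherian.
have hinj := S_to_limit_inj hc0.
split; split; [exact: hinj | exact: S_to_limit_surj |
               exact: canon_map_inj | exact: canon_map_surj].
Qed.
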